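(* Let $G$ be a group, let $K$ be an uncountable algebraically closed field, and let $A$ be an affine algebraic set over $K$. Then every bijective algebraic cellular automaton $\tau\colon A^G\to A^G$ is reversible, i.e., its inverse map $\tau^{-1}\colon A^G\to A^G$ is also a cellular automaton.
   Context: For a group $G$ and a set $A$, $A^G$ is the set of maps $x\colon G\to A$, with the $G$-shift $(gx)(h)=x(g^{-1}h)$. A cellular automaton is a map $\tau\colon A^G\to A^G$ for which there exist a finite subset $M\subset G$ (memory set) and a map $\mu\colon A^M\to A$ (local defining map) with $\tau(x)(g)=\mu((g^{-1}x)|_M)$ for all $x\in A^G$, $g\in G$. A cellular automaton is reversible if it is bijective and its inverse is a cellular automaton. An affine algebraic set over a field $K$ is the common zero set in some $K^m$ of a set of polynomials; a map between affine algebraic sets is regular if it is the restriction of a polynomial map. A cellular automaton $\tau\colon A^G\to A^G$ with $A$ an affine algebraic set over $K$ is algebraic if for some (equivalently any) memory set $M$ the local defining map $\mu\colon A^M\to A$ is regular ($A^M$ being viewed as an affine algebraic set). *)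

From HB Require Import structures.
From mathcomp Require Import all_boot all_order all_algebra.
Set Implicit Arguments. Unset Strict Implicit. Unset Printing Implicit Defensive.
Import GRing.Theory.
Local Open Scope ring_scope.

Record group := Group {
  gcar :> Type;
  gmul : gcar -> gcar -> gcar;
  gone : gcar;
  ginv : gcar -> gcar;
  gmulA : forall a b c, gmul a (gmul b c) = gmul (gmul a b) c;
  gmul1l : forall a, gmul gone a = a;
  gmul1r : forall a, gmul a gone = a;
  gmulVl : forall a, gmul (ginv a) a = gone;
  gmulVr : forall a, gmul a (ginv a) = gone }.

Inductive pexpr (K : Type) (V : Type) : Type :=
  | PVar of V
  | PConst of K
  | PAdd of pexpr K V & pexpr K V
  | PMul of pexpr K V & pexpr K V.
Arguments PVar {K V}. Arguments PConst {K V}.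

Fixpoint peval (K : nzRingType) (V : Type) (p : pexpr K V) (v : V -> K) : K :=
  match p with
  | PVar i => v i
  | PConst c => c
  | PAdd p q => peval p v + peval q v
  | PMul p q => peval p v * peval q v
  end.

Definition aff_set (K : nzRingType) (m : nat) (S : pexpr K 'I_m -> Prop) :=
  {v : 'I_m -> K | forall p, S p -> peval p v = 0}.

(* ---------- Cellular automata ----------
   A^G = G -> A, and (g^{-1} x)(h) = x(g h).  A finite memory set M is given
   as a finite family M : 'I_k -> G, and A^M is identified with 'I_k -> A. *)
Definition restr_shift (G : group) (A : Type) (k : nat) (M : 'I_k -> G)
  (x : G -> A) (g : G) : 'I_k -> A := fun i => x (gmul g (M i)).

Definition local_rule (G : group) (A : Type) (tau : (G -> A) -> (G -> A))
  (k : nat) (M : 'I_k -> G) (mu : ('I_k -> A) -> A) : Prop :=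
  forall x g, tau x g = mu (restr_shift M x g).

Definition is_CA (G : group) (A : Type) (tau : (G -> A) -> (G -> A)) : Prop :=
  exists k (M : 'I_k -> G) (mu : ('I_k -> A) -> A), local_rule tau M mu.

Definition reversible (G : group) (A : Type) (tau : (G -> A) -> (G -> A)) : Prop :=
  bijective tau /\ exists sigma, cancel tau sigma /\ cancel sigma tau /\ is_CA sigma.

(* A^M, with A in K^m, is viewed as an affine algebraic set in K^(k*m), the
   coordinates being indexed by 'I_k * 'I_m. *)
Definition regular_local (K : nzRingType) (m : nat) (S : pexpr K 'I_m -> Prop)
  (k : nat) (mu : ('I_k -> aff_set S) -> aff_set S) : Prop :=
  exists F : 'I_m -> pexpr K ('I_k * 'I_m),
    forall (u : 'I_k -> aff_set S) (j : 'I_m),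
      proj1_sig (mu u) j = peval (F j) (fun ij => proj1_sig (u ij.1) ij.2).

Definition algebraic_CA (K : nzRingType) (m : nat) (S : pexpr K 'I_m -> Prop)
  (G : group) (tau : (G -> aff_set S) -> (G -> aff_set S)) : Prop :=
  exists k (M : 'I_k -> G) (mu : ('I_k -> aff_set S) -> aff_set S),
    local_rule tau M mu /\ regular_local mu.

Definition uncountable (T : Type) : Prop :=
  ~ exists f : T -> nat, injective f.

From Stdlib Require Import Classical ClassicalEpsilon FunctionalExtensionality ProofIrrelevance.
From HB Require Import structures.
From mathcomp Require Import all_boot all_algebra closed_field zify.
Set Implicit Arguments. Unset Strict Implicit. Unset Printing Implicit Defensive.
Import GRing.Theory.
Local Open Scope ring_scope.

(* Since tau is a bijective cellular automaton, its inverse is a cellular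
   automaton as soon as x(1) is determined by the values of tau x on some
   finite subset of G.  Otherwise, for every n there are configurations x, y
   with x(1) <> y(1) whose images agree at the first n elements of the subgroup
   H generated by the memory set.  As A is cut out by finitely many polynomials
   (Hilbert's basis theorem) and the local rule is polynomial, these conditions
   form a decreasing sequence of satisfiable first-order formulas over K in
   countably many variables, the coordinates of x and y at the points of H.
   By quantifier elimination every definable subset of K is finite or
   cofinite; as K is uncountable, such a sequence has a common solution, built
   one coordinate at a time.  It yields two configurations, constant off H,
   with the same image and different values at 1, contradicting injectivity. *)

Lemma dependent_choice_seq (T : Type) (x0 : T) (P : seq T -> T -> Prop) :
  (forall (f : nat -> T) n, (forall i, (i < n)%N -> P (mkseq f i) (f i)) ->
     exists x, P (mkseq f n) x) ->
  exists f : nat -> T, forall n, P (mkseq f n) (f n).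
Proof.
move=> ext; pose next s := epsilon (inhabits x0) (P s).
pose fix prefix n := if n is n'.+1 then rcons (prefix n') (next (prefix n')) else [::].
pose f n := next (prefix n).
have prefixE n : prefix n = mkseq f n by elim: n => // n IHn; rewrite mkseqS -IHn.
exists f => n; elim/ltn_ind: n => n IHn; rewrite /f prefixE.
by apply: epsilon_spec; apply: ext => i /IHn; rewrite -prefixE.
Qed.

Lemma ex_min_measure (T : Type) (measure : T -> nat) (P : T -> Prop) :
  (exists x, P x) -> exists x, P x /\ forall y, P y -> (measure x <= measure y)%N.
Proof.
move=> [x Px]; have [n sx] : exists n, measure x = n by exists (measure x).
elim/ltn_ind: n x sx Px => n IHn x sx Px.
case: (classic (exists y, P y /\ (measure y < n)%N)) => [[y [Py lt_yn]]|no_smaller].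
  exact: IHn lt_yn y erefl Py.
exists x; split=> // y Py; rewrite sx leqNgt; apply/negP => lt_yn.
by apply: no_smaller; exists y.
Qed.

Lemma mem_mkseq_lt (T : eqType) (f : nat -> T) n i : (i < n)%N -> f i \in mkseq f n.
Proof. by move=> lt_in; apply: map_f; rewrite mem_iota. Qed.

Lemma mem_mkseq (T : eqType) (f : nat -> T) n y :
  y \in mkseq f n -> exists2 i, (i < n)%N & y = f i.
Proof. by case/mapP=> i; rewrite mem_iota add0n => lt_in ->; exists i. Qed.

Lemma mkseq_subset (T : eqType) (f : nat -> T) m n :
  (m <= n)%N -> {subset mkseq f m <= mkseq f n}.
Proof. by move=> le_mn _ /mem_mkseq[i lt_im ->]; exact/mem_mkseq_lt/(leq_trans lt_im). Qed.

(** * Hilbert's basis theorem *)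

Section Ideals.
Variable R : nzRingType.
Implicit Types (l : seq R) (x : R).

Inductive in_ideal l : R -> Prop :=
| in_ideal0 : in_ideal l 0
| in_ideal_gen x : x \in l -> in_ideal l x
| in_idealD x y : in_ideal l x -> in_ideal l y -> in_ideal l (x + y)
| in_idealMl r x : in_ideal l x -> in_ideal l (r * x).

Lemma in_ideal_trans l l' x :
  (forall y, y \in l -> in_ideal l' y) -> in_ideal l x -> in_ideal l' x.
Proof.
by move=> sub; elim=> *; [exact: in_ideal0|exact: sub|exact: in_idealD|exact: in_idealMl].
Qed.

Lemma in_ideal_subset l l' x : {subset l <= l'} -> in_ideal l x -> in_ideal l' x.
Proof. by move=> sub; apply: in_ideal_trans => y /sub; apply: in_ideal_gen. Qed.

Lemma in_idealB l x y : in_ideal l x -> in_ideal l y -> in_ideal l (x - y).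
Proof. by move=> Ix Iy; apply: in_idealD => //; rewrite -mulN1r; apply: in_idealMl. Qed.

End Ideals.

Definition noetherian (R : nzRingType) :=
  forall f : nat -> R, exists n, in_ideal (mkseq f n) (f n).

Lemma noetherian_field (F : fieldType) : noetherian F.
Proof.
move=> f; case: (classic (exists n, f n != 0)) => [[n fn_neq0]|all0].
  exists n.+1; rewrite -[f n.+1](mulfVK fn_neq0); apply: in_idealMl.
  exact/in_ideal_gen/mem_mkseq_lt.
exists 0%N; have -> : f 0%N = 0 by apply/eqP; apply: contra_notT all0; exists 0%N.
exact: in_ideal0.
Qed.

Lemma in_ideal_rmorph0 (R R' : nzRingType) (phi : {rmorphism R -> R'}) l x :
  (forall y, y \in l -> phi y = 0) -> in_ideal l x -> phi x = 0.
Proof.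
move=> phi_l; elim=> [|y /phi_l //|y z _ IHy _ IHz|r y _ IHy].
- exact: rmorph0.
- by rewrite rmorphD IHy IHz addr0.
- by rewrite rmorphM IHy mulr0.
Qed.

Section AscendingChain.
Variables (R : nzRingType) (f : nat -> R).

Definition in_chain_ideal (x : R) := exists n, in_ideal (mkseq f n) x.

Lemma chain_ideal_bound (l : seq R) : (forall x, x \in l -> in_chain_ideal x) ->
  exists n, forall x, x \in l -> in_ideal (mkseq f n) x.
Proof.
elim: l => [|y l IHl] J_l; first by exists 0%N.
have [n1 Iy] := J_l y (mem_head _ _).
have [n2 Il] : exists n, forall x, x \in l -> in_ideal (mkseq f n) x.
  by apply: IHl => x lx; apply: J_l; rewrite in_cons lx orbT.
exists (maxn n1 n2) => x; rewrite in_cons => /orP[/eqP-> | lx].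
  exact: in_ideal_subset (mkseq_subset (leq_maxl _ _)) Iy.
exact: in_ideal_subset (mkseq_subset (leq_maxr _ _)) (Il x lx).
Qed.

Lemma in_chain_idealB (x y : R) :
  in_chain_ideal x -> in_chain_ideal y -> in_chain_ideal (x - y).
Proof.
move=> Jx Jy; have [|n Ixy] := @chain_ideal_bound [:: x; y].
  by move=> z; rewrite !inE => /orP[] /eqP->.
by exists n; apply: in_idealB; apply: Ixy; rewrite !inE eqxx ?orbT.
Qed.

Hypothesis f_strict : forall n, ~ in_ideal (mkseq f n) (f n).

Lemma chain_ideal_not_fg (l : seq R) : (forall x, x \in l -> in_chain_ideal x) ->
  exists x, in_chain_ideal x /\ ~ in_ideal l x.
Proof.
move=> J_l; have [n Il] := chain_ideal_bound J_l.
exists (f n); split; first by exists n.+1; apply/in_ideal_gen/mem_mkseq_lt.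
by move=> Ifn; apply: (f_strict (in_ideal_trans Il Ifn)).
Qed.

End AscendingChain.

Lemma in_ideal_lead_coef (R : nzRingType) (l : seq {poly R}) d r :
  (forall p, p \in l -> (size p <= d)%N) -> in_ideal (map lead_coef l) r ->
  exists2 q, in_ideal l q & (size q <= d)%N /\ q`_d.-1 = r.
Proof.
move=> size_l; elim=> [|_ /mapP[p lp ->]|a b _ [qa Iqa [sa ca]] _ [qb Iqb [sb cb]]
                     |c a _ [qa Iqa [sa ca]]].
- by exists 0; [exact: in_ideal0 | rewrite size_poly0 coef0].
- have [-> | p_neq0] := eqVneq p 0.
    by exists 0; [exact: in_ideal0 | rewrite size_poly0 coef0 lead_coef0].
  have sp := size_l p lp; have sp_gt0 : (0 < size p)%N by rewrite size_poly_gt0.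
  exists ('X^(d - size p) * p); first exact/in_idealMl/in_ideal_gen.
  split; last by rewrite coefXnM ifN ?lead_coefE; [congr nth; lia | lia].
  apply/leq_sizeP => j le_dj; rewrite coefXnM; case: ifP => // _.
  by apply: nth_default; move: (size p) sp => s sp; lia.
- exists (qa + qb); first exact: in_idealD.
  by rewrite coefD ca cb (leq_trans (size_polyD _ _)) // geq_max sa.
- exists (c%:P * qa); first exact: in_idealMl.
  by rewrite mul_polyC coefZ ca (leq_trans (size_scale_leq _ _)).
Qed.

(* Choose g n of minimal size in the union of the chain, outside the ideal of
   g 0, ..., g (n-1).  Once lead_coef (g N) lies in the ideal of the earlier
   leading coefficients, subtracting a combination of the earlier g i from g N
   gives a smaller such element. *)
Theorem noetherian_poly (R : nzRingType) : noetherian R -> noetherian {poly R}.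
Proof.
move=> noethR f; apply: NNPP => no_n.
have f_strict n : ~ in_ideal (mkseq f n) (f n) by move=> In; apply: no_n; exists n.
pose cand l q := in_chain_ideal f q /\ ~ in_ideal l q.
pose P l q := cand l q /\ forall q', cand l q' -> (size q <= size q')%N.
have [g gP] : exists g : nat -> {poly R}, forall n, P (mkseq g n) (g n).
  apply: (dependent_choice_seq 0) => g n gP; apply: ex_min_measure.
  apply: chain_ideal_not_fg => // _ /mem_mkseq[i lt_in ->].
  by case: (gP i lt_in) => -[].
have Jg n : in_chain_ideal f (g n) by case: (gP n) => -[].
have nIg n : ~ in_ideal (mkseq g n) (g n) by case: (gP n) => -[].
have min_g n : forall q, cand (mkseq g n) q -> (size (g n) <= size q)%N by case: (gP n).
have [N IN] := noethR (lead_coef \o g).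
set d := size (g N).
have size_le i : (i < N)%N -> (size (g i) <= d)%N.
  move=> lt_iN; apply: (min_g i); split; first exact: Jg.
  by move=> Ii; apply: (nIg N); apply: in_ideal_subset Ii; apply/mkseq_subset/ltnW.
have [q Iq [size_q q_d]] : exists2 q, in_ideal (mkseq g N) q &
    (size q <= d)%N /\ q`_d.-1 = lead_coef (g N).
  apply: in_ideal_lead_coef; first by move=> _ /mem_mkseq[i /size_le le_id ->].
  by rewrite /mkseq -map_comp.
have Jq : in_chain_ideal f q.
  have [|n In] := @chain_ideal_bound _ f (mkseq g N).
    by move=> _ /mem_mkseq[i _ ->]; apply: Jg.
  by exists n; apply: in_ideal_trans Iq.
have nIh : ~ in_ideal (mkseq g N) (g N - q).
  by move=> Ih; apply: (nIg N); rewrite -(subrK q (g N)); apply: in_idealD.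
have d_gt0 : (0 < d)%N.
  by rewrite size_poly_gt0; apply/eqP=> gN0; apply: (nIg N); rewrite gN0; exact: in_ideal0.
have size_h : (size (g N - q)%R < d)%N.
  rewrite -(prednK d_gt0) ltnS; apply/leq_sizeP => j.
  rewrite leq_eqVlt => /orP[/eqP <-|lt_dj]; first by rewrite coefB q_d lead_coefE subrr.
  have le_dj : (d <= j)%N by rewrite -(prednK d_gt0).
  by rewrite coefB !nth_default ?subrr // (leq_trans size_q le_dj).
have := min_g N (g N - q) (conj (in_chain_idealB (Jg N) Jq) nIh).
by rewrite leqNgt size_h.
Qed.

Section IteratedPolynomials.
Variable K : fieldType.

(* [polyn n] is K[X_0, ..., X_(n-1)], built as K[X_0]...[X_(n-1)]. *)
Fixpoint polyn (n : nat) : comNzRingType :=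
  if n is n'.+1 then {poly polyn n'} else K.

Fixpoint polyn_var (n : nat) : nat -> polyn n :=
  if n is n'.+1 then fun i => if i == n' then 'X else (polyn_var n' i)%:P
  else fun _ => 0 : K.

Fixpoint polyn_const (n : nat) : K -> polyn n :=
  if n is n'.+1 then fun c => (polyn_const n' c)%:P else id.

Lemma noetherian_polyn n : noetherian (polyn n).
Proof. by elim: n => [|n IHn]; [exact: noetherian_field | exact: noetherian_poly]. Qed.

Lemma polyn_eval n (v : nat -> K) : exists phi : {rmorphism polyn n -> K},
  (forall i, (i < n)%N -> phi (polyn_var n i) = v i) /\
  (forall c, phi (polyn_const n c) = c).
Proof.
elim: n => [|n [phi [phi_var phi_const]]]; first by exists idfun.
have phi_comm : commr_rmorph phi (v n) by move=> a; apply: mulrC.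
exists (horner_morph phi_comm); split=> [i|c] /=; last by rewrite horner_morphC.
case: eqP => [-> _|/eqP ne_in]; first by rewrite horner_morphX.
by rewrite ltnS leq_eqVlt (negPf ne_in) => lt_in; rewrite horner_morphC phi_var.
Qed.

Variable m : nat.

Fixpoint pexpr_polyn (p : pexpr K 'I_m) : polyn m :=
  match p with
  | PVar i => polyn_var m i
  | PConst c => polyn_const m c
  | PAdd p q => pexpr_polyn p + pexpr_polyn q
  | PMul p q => pexpr_polyn p * pexpr_polyn q
  end.

Lemma pexpr_polyn_eval (v : 'I_m -> K) :
  exists phi : {rmorphism polyn m -> K}, forall p, phi (pexpr_polyn p) = peval p v.
Proof.
have [phi [phi_var phi_const]] := polyn_eval m (fun i => oapp v 0 (insub i)).
exists phi; elim=> [i|c|p IHp q IHq|p IHp q IHq] /=.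
- by rewrite phi_var // valK.
- exact: phi_const.
- by rewrite rmorphD IHp IHq.
- by rewrite rmorphM IHp IHq.
Qed.

Theorem finite_basis (S : pexpr K 'I_m -> Prop) :
  exists n (B : 'I_n -> pexpr K 'I_m), (forall i, S (B i)) /\
    forall v, (forall i, peval (B i) v = 0) -> forall p, S p -> peval p v = 0.
Proof.
apply: NNPP => no_basis.
pose P l p := S p /\ ~ in_ideal (map pexpr_polyn l) (pexpr_polyn p).
have [f fP] : exists f, forall n, P (mkseq f n) (f n).
  apply: (dependent_choice_seq (PConst 0)) => f n fP; apply: NNPP => no_ext.
  apply: no_basis; exists n, (fun i : 'I_n => f i).
  split=> [i|v vB p Sp]; first by case: (fP i (ltn_ord i)).
  have [phi phiE] := pexpr_polyn_eval v; rewrite -phiE.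
  apply: (in_ideal_rmorph0 (l := mkseq (pexpr_polyn \o f) n)).
    by move=> _ /mem_mkseq[i lt_in ->]; rewrite /= phiE (vB (Ordinal lt_in)).
  by rewrite /mkseq map_comp; apply: NNPP => nIp; apply: no_ext; exists p.
have [n In] := noetherian_polyn (pexpr_polyn \o f).
by case: (fP n) => _; rewrite /mkseq -map_comp.
Qed.

End IteratedPolynomials.

(** * First-order formulas under valuations *)

Section FormulaValuations.
Variable R : unitRingType.
Implicit Types (t : GRing.term R) (f : GRing.formula R) (e : seq R) (v : nat -> R).

Fixpoint ub_fvar f : nat :=
  match f with
  | GRing.Bool _ => 0
  | GRing.Equal a b => maxn (GRing.ub_var a) (GRing.ub_var b)
  | GRing.Unit a => GRing.ub_var a
  | GRing.And f1 f2 | GRing.Or f1 f2 | GRing.Implies f1 f2 => maxn (ub_fvar f1) (ub_fvar f2)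
  | GRing.Not f1 | GRing.Exists _ f1 | GRing.Forall _ f1 => ub_fvar f1
  end%N.

Definition agree_below (n : nat) e e' := forall i, (i < n)%N -> e`_i = e'`_i.

Lemma agree_maxl a b e e' : agree_below (maxn a b) e e' -> agree_below a e e'.
Proof. by move=> eq_e i lt_ia; apply/eq_e/(leq_trans lt_ia)/leq_maxl. Qed.

Lemma agree_maxr a b e e' : agree_below (maxn a b) e e' -> agree_below b e e'.
Proof. by move=> eq_e i lt_ib; apply/eq_e/(leq_trans lt_ib)/leq_maxr. Qed.

Lemma eq_eval_ub t e e' :
  agree_below (GRing.ub_var t) e e' -> GRing.eval e t = GRing.eval e' t.
Proof.
elim: t => //= [i|a IHa b IHb|a IHa|a IHa n|a IHa b IHb|a IHa|a IHa n] eq_e.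
- exact: eq_e.
- by rewrite (IHa (agree_maxl eq_e)) (IHb (agree_maxr eq_e)).
- by rewrite IHa.
- by rewrite IHa.
- by rewrite (IHa (agree_maxl eq_e)) (IHb (agree_maxr eq_e)).
- by rewrite IHa.
- by rewrite IHa.
Qed.

Lemma eq_holds_ub f e e' :
  agree_below (ub_fvar f) e e' -> (GRing.holds e f <-> GRing.holds e' f).
Proof.
elim: f e e' => //= [a b|a|f1 IH1 f2 IH2|f1 IH1 f2 IH2|f1 IH1 f2 IH2|f1 IH1|n f1 IH1|n f1 IH1]
  e e' eq_e; rewrite ?(IH1 _ _ (agree_maxl eq_e)) ?(IH2 _ _ (agree_maxr eq_e)) //.
- by rewrite (eq_eval_ub (agree_maxl eq_e)) (eq_eval_ub (agree_maxr eq_e)).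
- by rewrite (eq_eval_ub eq_e).
- by rewrite (IH1 _ _ eq_e).
- have eq_set x : GRing.holds (set_nth 0 e n x) f1 <-> GRing.holds (set_nth 0 e' n x) f1.
    by apply: IH1 => i lt_i; rewrite !nth_set_nth /=; case: eqP => // _; apply: eq_e.
  by split=> -[x]; exists x; apply/eq_set.
- have eq_set x : GRing.holds (set_nth 0 e n x) f1 <-> GRing.holds (set_nth 0 e' n x) f1.
    by apply: IH1 => i lt_i; rewrite !nth_set_nth /=; case: eqP => // _; apply: eq_e.
  by split=> holds_x x; apply/eq_set.
Qed.

Definition holds_fun v f := GRing.holds (mkseq v (ub_fvar f)) f.
Definition eval_fun v t := GRing.eval (mkseq v (GRing.ub_var t)) t.

Lemma agree_mkseq v n e :
  (forall i, (i < n)%N -> e`_i = v i) -> agree_below n e (mkseq v n).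
Proof. by move=> eq_e i lt_in; rewrite nth_mkseq ?eq_e. Qed.

Lemma holds_funE e v f : (forall i, (i < ub_fvar f)%N -> e`_i = v i) ->
  (GRing.holds e f <-> holds_fun v f).
Proof. by move/agree_mkseq; apply: eq_holds_ub. Qed.

Lemma eval_funE e v t : (forall i, (i < GRing.ub_var t)%N -> e`_i = v i) ->
  GRing.eval e t = eval_fun v t.
Proof. by move/agree_mkseq; apply: eq_eval_ub. Qed.

Lemma eq_holds_fun v w f : (forall i, (i < ub_fvar f)%N -> v i = w i) ->
  (holds_fun v f <-> holds_fun w f).
Proof. by move=> eq_vw; apply: holds_funE => i lt_i; rewrite nth_mkseq ?eq_vw. Qed.

Lemma mkseq_maxl v a b i : (i < a)%N -> (mkseq v (maxn a b))`_i = v i.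
Proof. by move=> lt_ia; rewrite nth_mkseq // (leq_trans lt_ia) ?leq_maxl. Qed.

Lemma mkseq_maxr v a b i : (i < b)%N -> (mkseq v (maxn a b))`_i = v i.
Proof. by move=> lt_ib; rewrite nth_mkseq // (leq_trans lt_ib) ?leq_maxr. Qed.

Lemma holds_fun_And v f1 f2 :
  holds_fun v (GRing.And f1 f2) <-> holds_fun v f1 /\ holds_fun v f2.
Proof. by rewrite /holds_fun /= (holds_funE (@mkseq_maxl v _ _)) (holds_funE (@mkseq_maxr v _ _)). Qed.

Lemma holds_fun_Not v f : holds_fun v (GRing.Not f) <-> ~ holds_fun v f.
Proof. by []. Qed.

Lemma holds_fun_Equal v a b :
  holds_fun v (GRing.Equal a b) <-> eval_fun v a = eval_fun v b.
Proof. by rewrite /holds_fun /= (eval_funE (@mkseq_maxl v _ _)) (eval_funE (@mkseq_maxr v _ _)). Qed.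

Lemma eval_fun_Var v i : eval_fun v (GRing.Var R i) = v i.
Proof. by rewrite /eval_fun /= nth_mkseq. Qed.

Lemma eval_fun_Add v a b : eval_fun v (GRing.Add a b) = eval_fun v a + eval_fun v b.
Proof. by rewrite /eval_fun /= (eval_funE (@mkseq_maxl v _ _)) (eval_funE (@mkseq_maxr v _ _)). Qed.

Lemma eval_fun_Mul v a b : eval_fun v (GRing.Mul a b) = eval_fun v a * eval_fun v b.
Proof. by rewrite /eval_fun /= (eval_funE (@mkseq_maxl v _ _)) (eval_funE (@mkseq_maxr v _ _)). Qed.

Fixpoint pexpr_term (V : Type) (s : V -> nat) (p : pexpr R V) : GRing.term R :=
  match p with
  | PVar a => GRing.Var R (s a)
  | PConst c => GRing.Const c
  | PAdd p q => GRing.Add (pexpr_term s p) (pexpr_term s q)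
  | PMul p q => GRing.Mul (pexpr_term s p) (pexpr_term s q)
  end.

Lemma eval_fun_pexpr_term (V : Type) (s : V -> nat) (p : pexpr R V) v :
  eval_fun v (pexpr_term s p) = peval p (v \o s).
Proof.
elim: p => [a|c|p IHp q IHq|p IHp q IHq] /=.
- exact: eval_fun_Var.
- by [].
- by rewrite eval_fun_Add IHp IHq.
- by rewrite eval_fun_Mul IHp IHq.
Qed.

Definition big_And (T : Type) (s : seq T) (F : T -> GRing.formula R) :=
  foldr (fun x acc => GRing.And (F x) acc) (GRing.Bool true) s.

Lemma holds_fun_big_And (T : eqType) (s : seq T) F v :
  holds_fun v (big_And s F) <-> (forall x, x \in s -> holds_fun v (F x)).
Proof.
elim: s => [|y s IHs] /=; first by split.
rewrite holds_fun_And IHs; split=> [[Fy Fs] x|Fs]; first by rewrite in_cons => /orP[/eqP->|/Fs].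
by split=> [|x sx]; apply: Fs; rewrite ?mem_head // in_cons sx orbT.
Qed.

Definition exists_block f (s : seq nat) := foldr (fun i g => GRing.Exists i g) f s.

Lemma holds_exists_block e f s : GRing.holds e (exists_block f s) <->
  exists2 e', (forall i, i \notin s -> e'`_i = e`_i) & GRing.holds e' f.
Proof.
elim: s e => [|i s IHs] e /=.
  split=> [holds_e|[e' eq_e']]; first by exists e.
  by apply: GRing.eq_holds => j; rewrite eq_e'.
split=> [[x /IHs[e' eq_e' holds_e']]|[e' eq_e' holds_e']].
  exists e' => // j; rewrite in_cons negb_or => /andP[/negPf ne_ji sj].
  by rewrite eq_e' // nth_set_nth /= ne_ji.
exists e'`_i; apply/IHs; exists e' => // j sj.
rewrite nth_set_nth /=; case: eqP => [->|/eqP ne_ji] //.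
by apply: eq_e'; rewrite in_cons negb_or ne_ji.
Qed.

End FormulaValuations.

(** * Definable subsets of an uncountable algebraically closed field *)

Section FiniteOrCofinite.
Variable T : eqType.
Implicit Types P Q : T -> Prop.

Definition finite_or_cofinite P := exists s : seq T,
  (forall x, P x -> x \in s) \/ (forall x, ~ P x -> x \in s).

Lemma eq_finite_or_cofinite P Q :
  (forall x, P x <-> Q x) -> finite_or_cofinite P -> finite_or_cofinite Q.
Proof. by move=> eqPQ [s [sP|sP]]; exists s; [left|right] => x Qx; apply: sP; rewrite eqPQ. Qed.

Lemma finite_or_cofiniteC P :
  finite_or_cofinite P -> finite_or_cofinite (fun x => ~ P x).
Proof. by move=> [s [sP|sP]]; exists s; [right|left] => x Px; apply: sP => //; apply: NNPP. Qed.

Lemma finite_or_cofiniteU P Q : finite_or_cofinite P -> finite_or_cofinite Q ->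
  finite_or_cofinite (fun x => P x \/ Q x).
Proof.
move=> [s [sP|sP]] [s' [sQ|sQ]]; exists (s ++ s').
- by left=> x [/sP|/sQ]; rewrite mem_cat => ->; rewrite ?orbT.
- by right=> x PQx; rewrite mem_cat sQ ?orbT // => Qx; apply: PQx; right.
- by right=> x PQx; rewrite mem_cat sP // => Px; apply: PQx; left.
- by right=> x PQx; rewrite mem_cat sP // => Px; apply: PQx; left.
Qed.

Lemma finite_or_cofiniteI P Q : finite_or_cofinite P -> finite_or_cofinite Q ->
  finite_or_cofinite (fun x => P x /\ Q x).
Proof.
move=> fP fQ; have := finite_or_cofiniteC (finite_or_cofiniteU
  (finite_or_cofiniteC fP) (finite_or_cofiniteC fQ)).
apply: eq_finite_or_cofinite => x; split=> [nPQ|[Px Qx] []//].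
by split; apply: NNPP => nx; apply: nPQ; [left|right].
Qed.

End FiniteOrCofinite.

Section DefinableSubsetsOfK.
Variable K : closedFieldType.

Lemma finite_or_cofinite_root (p : {poly K}) : finite_or_cofinite (fun x => p.[x] = 0).
Proof.
have [->|p_neq0] := eqVneq p 0; first by exists [::]; right=> x; rewrite horner0.
have [r ->] := closed_field_poly_normal p.
exists r; left=> x /eqP; rewrite -/(root _ x) rootZ ?lead_coef_eq0 //.
by rewrite root_prod_XsubC.
Qed.

Lemma rterm_horner (t : GRing.term K) e i : GRing.rterm t ->
  exists p : {poly K}, forall x, GRing.eval (set_nth 0 e i x) t = p.[x].
Proof.
elim: t => /= [j|c|n|a IHa b IHb|a IHa|a IHa n|a IHa b IHb|a IHa|a IHa n] //.
- move=> _; have [->|ne_ji] := eqVneq j i.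
    by exists 'X => x; rewrite nth_set_nth /= eqxx hornerX.
  by exists (e`_j)%:P => x; rewrite nth_set_nth /= (negPf ne_ji) hornerC.
- by move=> _; exists c%:P => x; rewrite hornerC.
- by move=> _; exists n%:R%:P => x; rewrite hornerC.
- by case/andP=> /IHa[p pE] /IHb[q qE]; exists (p + q) => x; rewrite hornerD pE qE.
- by case/IHa=> p pE; exists (- p) => x; rewrite hornerN pE.
- by case/IHa=> p pE; exists (p *+ n) => x; rewrite hornerMn pE.
- by case/andP=> /IHa[p pE] /IHb[q qE]; exists (p * q) => x; rewrite hornerM pE qE.
- by case/IHa=> p pE; exists (p ^+ n) => x; rewrite horner_exp pE.
Qed.

Lemma finite_or_cofinite_qf e i (f : GRing.formula K) :
  GRing.qf_form f -> GRing.rformula f ->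
  finite_or_cofinite (fun x => GRing.qf_eval (set_nth 0 e i x) f).
Proof.
elim: f => //= [b|a b|f1 IH1 f2 IH2|f1 IH1 f2 IH2|f1 IH1 f2 IH2|f1 IH1].
- by move=> _ _; exists [::]; case: b; [right|left].
- move=> _ /andP[/(rterm_horner e i)[p pE] /(rterm_horner e i)[q qE]].
  apply: eq_finite_or_cofinite (finite_or_cofinite_root (p - q)) => x.
  by rewrite hornerD hornerN pE qE -subr_eq0; split=> /eqP.
- move=> /andP[qf1 qf2] /andP[r1 r2].
  apply: eq_finite_or_cofinite (finite_or_cofiniteI (IH1 qf1 r1) (IH2 qf2 r2)) => x.
  by split=> [[-> ->]|/andP].
- move=> /andP[qf1 qf2] /andP[r1 r2].
  apply: eq_finite_or_cofinite (finite_or_cofiniteU (IH1 qf1 r1) (IH2 qf2 r2)) => x.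
  by split=> [[] ->|/orP]; rewrite ?orbT.
- move=> /andP[qf1 qf2] /andP[r1 r2].
  apply: eq_finite_or_cofinite
    (finite_or_cofiniteU (finite_or_cofiniteC (IH1 qf1 r1)) (IH2 qf2 r2)) => x.
  by case: (GRing.qf_eval _ f1); case: (GRing.qf_eval _ f2) => /=; intuition.
- move=> qf1 r1; apply: eq_finite_or_cofinite (finite_or_cofiniteC (IH1 qf1 r1)) => x.
  by split=> /negP.
Qed.

Lemma finite_or_cofinite_holds (f : GRing.formula K) e i :
  finite_or_cofinite (fun x => GRing.holds (set_nth 0 e i x) f).
Proof.
have /andP[qf rf] := GRing.quantifier_elim_wf (@ClosedFieldQE.wf_ex_elim K)
  (GRing.to_rform_rformula f).
apply: eq_finite_or_cofinite (finite_or_cofinite_qf e i qf rf) => x.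
rewrite -(rwP (GRing.quantifier_elim_rformP (@ClosedFieldQE.wf_ex_elim K)
  (ClosedFieldQE.holds_ex_elim (@GRing.solve_monicpoly K)) _ (GRing.to_rform_rformula f))).
exact: GRing.to_rformP.
Qed.

End DefinableSubsetsOfK.

Lemma uncountable_avoid (T : eqType) (s : nat -> seq T) :
  uncountable T -> exists x, forall k, x \notin s k.
Proof.
move=> T_unc; apply: NNPP => cover; apply: T_unc.
have in_s x : exists k, x \in s k.
  by apply: NNPP => nx; apply: cover; exists x => k; apply/negP => skx; apply: nx; exists k.
pose k_of x := epsilon (inhabits 0%N) (fun k => x \in s k).
have k_ofP x : x \in s (k_of x) by exact: epsilon_spec (in_s x).
exists (fun x => pickle (k_of x, index x (s (k_of x)))) => x y /(pcan_inj pickleK)[kxy ixy].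
by rewrite -(nth_index x (k_ofP x)) ixy kxy nth_index // -kxy.
Qed.

Section NestedSequences.
Variables (T : eqType) (Q : nat -> T -> Prop).
Hypothesis Q_nested : forall k x, Q k.+1 x -> Q k x.
Hypothesis Q_nonempty : forall k, exists x, Q k x.

Lemma nested_le k k' x : (k <= k')%N -> Q k' x -> Q k x.
Proof. by move/subnK<-; elim: (k' - k)%N => // n IHn /Q_nested /IHn. Qed.

Lemma nested_meet_finite k0 (s0 : seq T) :
  (forall x, Q k0 x -> x \in s0) -> exists x, forall k, Q k x.
Proof.
move=> s0Q; apply: NNPP => no_meet.
have fails x : exists k, ~ Q k x.
  by apply: NNPP => nx; apply: no_meet; exists x => k; apply: NNPP => nQ; apply: nx; exists k.
pose k_of x := epsilon (inhabits 0%N) (fun k => ~ Q k x).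
have k_ofP x : ~ Q (k_of x) x by exact: epsilon_spec (fails x).
have [x Qx] := Q_nonempty (maxn k0 (\max_(y <- s0) k_of y)).
have s0x : x \in s0 by apply/s0Q/(nested_le (leq_maxl _ _) Qx).
apply: (k_ofP x); apply: nested_le Qx; apply: leq_trans (leq_maxr _ _).
exact: leq_bigmax_seq.
Qed.

Lemma nested_finite_or_cofinite : uncountable T ->
  (forall k, finite_or_cofinite (Q k)) -> exists x, forall k, Q k x.
Proof.
move=> T_unc Q_foc.
case: (classic (exists k0 (s0 : seq T), forall x, Q k0 x -> x \in s0)).
  by case=> k0 [s0]; apply: nested_meet_finite.
move=> no_finite; pose s k := epsilon (inhabits [::]) (fun s => forall x, ~ Q k x -> x \in s).
have sQ k : forall x, ~ Q k x -> x \in s k.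
  apply: (epsilon_spec (inhabits [::]) (fun s => forall x, ~ Q k x -> x \in s)).
  have [s' [s'Q|s'Q]] := Q_foc k; last by exists s'.
  by case: no_finite; exists k, s'.
have [x sx] := uncountable_avoid s T_unc.
by exists x => k; apply: NNPP => /sQ; apply/negP.
Qed.

End NestedSequences.

Section NestedFormulas.
Variable K : closedFieldType.
Hypothesis K_uncountable : uncountable K.

Lemma mem_iota_between i j b : (i \in iota j.+1 (b - j.+1)) = (j < i < b)%N.
Proof. by rewrite mem_iota; apply/andP/andP; lia. Qed.

(* Existentially quantifying the variables of f beyond [size s] makes this set
   definable. *)
Lemma finite_or_cofinite_extension (f : GRing.formula K) (s : seq K) :
  finite_or_cofinite (fun x => exists v,
    (forall i, (i <= size s)%N -> v i = (rcons s x)`_i) /\ holds_fun v f).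
Proof.
set j := size s; set b := ub_fvar f.
apply: eq_finite_or_cofinite (finite_or_cofinite_holds
  (exists_block f (iota j.+1 (b - j.+1))) s j) => x.
have -> : set_nth 0 s j x = rcons s x by rewrite /j; elim: s {j} => //= y s ->.
rewrite holds_exists_block; split=> [[e' eq_e' holds_e']|[v [eq_v holds_v]]].
  exists (nth 0 e'); split; last exact/(holds_funE (e := e')).
  by move=> i le_ij; apply: eq_e'; rewrite mem_iota_between; lia.
pose e' := mkseq (fun i => if (j < i < b)%N then v i else (rcons s x)`_i)
  (maxn (size (rcons s x)) b).
exists e' => [i|].
  rewrite mem_iota_between => /negPf out_i; rewrite /e'.
  have [lt_i|ge_i] := ltnP i (maxn (size (rcons s x)) b); first by rewrite nth_mkseq ?out_i.
  by rewrite !nth_default ?size_mkseq // (leq_trans (leq_maxl _ _) ge_i).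
apply/(holds_funE (v := v)) => // i; rewrite -/b => lt_ib.
rewrite nth_mkseq ?(leq_trans lt_ib) ?leq_maxr // andbT.
by case: ltnP => // le_ij; rewrite eq_v.
Qed.

Theorem nested_formulas_sat (f : nat -> GRing.formula K) :
  (forall k v, holds_fun v (f k.+1) -> holds_fun v (f k)) ->
  (forall k, exists v, holds_fun v (f k)) ->
  exists v, forall k, holds_fun v (f k).
Proof.
move=> f_nested f_sat.
pose extends (s : seq K) := forall k, exists2 v : nat -> K,
  (forall i, (i < size s)%N -> v i = s`_i) & holds_fun v (f k).
have extend s : extends s -> exists x, extends (rcons s x).
  move=> ext_s; pose Q k x := exists v : nat -> K,
    (forall i, (i <= size s)%N -> v i = (rcons s x)`_i) /\ holds_fun v (f k).
  have [|k|k|x Qx] := @nested_finite_or_cofinite _ Q _ _ K_uncountable.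
  - by move=> k x [v [eq_v /f_nested holds_v]]; exists v.
  - have [v eq_v holds_v] := ext_s k; exists (v (size s)), v; split=> // i le_i.
    rewrite leq_eqVlt in le_i; case/orP: le_i => [/eqP->|lt_i].
      by rewrite nth_rcons ltnn eqxx.
    by rewrite nth_rcons lt_i eq_v.
  - exact: finite_or_cofinite_extension.
  exists x => k; have [v [eq_v holds_v]] := Qx k.
  by exists v => // i; rewrite size_rcons ltnS; apply: eq_v.
have [v vP] : exists v : nat -> K, forall n, extends (rcons (mkseq v n) (v n)).
  apply: (@dependent_choice_seq _ 0 (fun s x => extends (rcons s x))) => v [_|n vP];
    apply: extend; first by move=> k; have [w holds_w] := f_sat k; exists w.
  by rewrite mkseqS; apply: vP.
exists v => k; have [w eq_w holds_w] := vP (ub_fvar (f k)) k.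
apply/(eq_holds_fun (w := w)) => // i lt_i.
by rewrite -mkseqS in eq_w; rewrite eq_w ?size_mkseq ?nth_mkseq // leqW.
Qed.

End NestedFormulas.

(** * Reversibility *)

Section Reversibility.
Variables (G : group) (A : Type).
Implicit Types (tau : (G -> A) -> G -> A) (x : G -> A).

(* [shift h x] is the configuration written h^-1 x in the paper. *)
Definition shift (h : G) x : G -> A := fun g => x (gmul h g).

Lemma local_rule_shift tau k (M : 'I_k -> G) mu h x :
  local_rule tau M mu -> tau (shift h x) = shift h (tau x).
Proof.
move=> tau_local; apply: functional_extensionality => g.
rewrite /shift !tau_local; congr mu; apply: functional_extensionality => i.
by rewrite /restr_shift gmulA.
Qed.

Definition finitely_determined tau := exists k (N : 'I_k -> G),
  forall x y, (forall i, tau x (N i) = tau y (N i)) -> x (gone G) = y (gone G).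

Lemma reversible_of_finitely_determined tau k (M : 'I_k -> G) mu :
  local_rule tau M mu -> bijective tau -> finitely_determined tau -> reversible tau.
Proof.
move=> tau_local tau_bij [n [N N_det]]; split=> //.
have [sigma tauK sigmaK] := tau_bij; exists sigma; do 2!split=> //.
(* The extra memory point [gone] supplies a default value of A for the choice. *)
pose N' (i : 'I_n.+1) := oapp N (gone G) (unlift ord0 i).
pose preimage (u : 'I_n.+1 -> A) x := forall j, tau x (N j) = u (lift ord0 j).
exists n.+1, N', (fun u => epsilon (inhabits (fun _ => u ord0)) (preimage u) (gone G)).
move=> y g; set u := restr_shift N' y g.
have shift_pre : preimage u (shift g (sigma y)).
  by move=> j; rewrite (local_rule_shift _ _ tau_local) sigmaK /u /restr_shift /shift /N' liftK.
have := epsilon_spec (inhabits (fun _ => u ord0)) (preimage u) (ex_intro _ _ shift_pre).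
set x' := epsilon _ _ => pre_x'.
by rewrite (N_det x' (shift g (sigma y))) /shift ?gmul1r // => i; rewrite pre_x' shift_pre.
Qed.

End Reversibility.

(** * Injective algebraic cellular automata are finitely determined *)

Section FiniteDetermination.
Variables (G : group) (K : closedFieldType) (m : nat) (S : pexpr K 'I_m -> Prop).
Variable tau : (G -> aff_set S) -> G -> aff_set S.
Variables (k : nat) (M : 'I_k -> G) (mu : ('I_k -> aff_set S) -> aff_set S).
Hypothesis tau_local : local_rule tau M mu.
Variable F : 'I_m -> pexpr K ('I_k * 'I_m).
Hypothesis muE : forall u j,
  proj1_sig (mu u) j = peval (F j) (fun ij => proj1_sig (u ij.1) ij.2).
Variables (nB : nat) (B : 'I_nB -> pexpr K 'I_m).
Hypothesis B_S : forall i, S (B i).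
Hypothesis B_basis : forall v, (forall i, peval (B i) v = 0) ->
  forall p, S p -> peval p v = 0.

(* Words in the letters M i and (M i)^-1 enumerate the subgroup generated by M. *)
Definition word := seq ('I_k * bool).
Definition word_of (n : nat) : word := odflt [::] (unpickle n).
Definition letter (l : 'I_k * bool) : G := if l.2 then M l.1 else ginv (M l.1).
Definition word_eval (w : word) : G := foldl (fun g l => gmul g (letter l)) (gone G) w.
Local Notation g_ n := (word_eval (word_of n)).

Lemma word_of_pickle w : word_of (pickle w) = w.
Proof. by rewrite /word_of pickleK. Qed.

Definition idx_one : nat := pickle ([::] : word).

Lemma idx_oneE : g_ idx_one = gone G.
Proof. by rewrite /idx_one word_of_pickle. Qed.

Lemma word_eval_rcons w l : word_eval (rcons w l) = gmul (word_eval w) (letter l).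
Proof. by rewrite /word_eval -cats1 foldl_cat. Qed.

(* The variable standing for the coordinate j of x (b = false) or y (b = true) at g_ n. *)
Definition var (n : nat) (b : bool) (j : 'I_m) : nat := pickle (n, b, j).
Definition neighbour (n : nat) (i : 'I_k) : nat := pickle (rcons (word_of n) (i, true)).

Lemma neighbourE n i : g_ (neighbour n i) = gmul (g_ n) (M i).
Proof. by rewrite /neighbour word_of_pickle word_eval_rcons. Qed.

Definition in_A_fm n : GRing.formula K :=
  big_And (enum 'I_nB) (fun i => big_And [:: false; true] (fun b =>
    GRing.Equal (pexpr_term (var n b) (B i)) (GRing.Const 0))).

Definition consistent_fm n : GRing.formula K :=
  big_And (iota 0 n.+1) (fun n' =>
    if excluded_middle_informative (g_ n = g_ n') then
      big_And (enum 'I_m) (fun j => big_And [:: false; true] (fun b =>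
        GRing.Equal (GRing.Var K (var n b j)) (GRing.Var K (var n' b j))))
    else GRing.Bool true).

Definition images_agree_fm n : GRing.formula K :=
  big_And (enum 'I_m) (fun j => GRing.Equal
    (pexpr_term (fun ij => var (neighbour n ij.1) false ij.2) (F j))
    (pexpr_term (fun ij => var (neighbour n ij.1) true ij.2) (F j))).

Definition differ_at_one_fm : GRing.formula K :=
  GRing.Not (big_And (enum 'I_m) (fun j =>
    GRing.Equal (GRing.Var K (var idx_one false j))
                (GRing.Var K (var idx_one true j)))).

Definition stage_fm n :=
  GRing.And (in_A_fm n) (GRing.And (consistent_fm n) (images_agree_fm n)).

Definition stages_fm n := GRing.And differ_at_one_fm (big_And (iota 0 n.+1) stage_fm).

Implicit Type v : nat -> K.

Lemma in_A_fmP v n : holds_fun v (in_A_fm n) <->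
  forall b i, peval (B i) (fun j => v (var n b j)) = 0.
Proof.
rewrite holds_fun_big_And; split=> [A_v b i|A_v i _].
  have /holds_fun_big_And/(_ b) := A_v i (mem_enum _ _).
  by rewrite !inE; case: b => /(_ isT)/holds_fun_Equal; rewrite eval_fun_pexpr_term.
by apply/holds_fun_big_And => b _; apply/holds_fun_Equal; rewrite eval_fun_pexpr_term A_v.
Qed.

Lemma consistent_fmP v n : holds_fun v (consistent_fm n) <->
  forall n', (n' <= n)%N -> g_ n = g_ n' -> forall b j, v (var n b j) = v (var n' b j).
Proof.
rewrite holds_fun_big_And; split=> [cons_v n' le_n'n eq_g b j|cons_v n'].
  have := cons_v n'; rewrite mem_iota ltnS le_n'n => /(_ isT).
  case: excluded_middle_informative => // _ /holds_fun_big_And/(_ j (mem_enum _ _)).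
  move/holds_fun_big_And/(_ b); rewrite !inE.
  by case: b => /(_ isT)/holds_fun_Equal; rewrite !eval_fun_Var.
rewrite mem_iota ltnS => le_n'n; case: excluded_middle_informative => // eq_g.
apply/holds_fun_big_And => j _; apply/holds_fun_big_And => b _.
by apply/holds_fun_Equal; rewrite !eval_fun_Var (cons_v n').
Qed.

Lemma images_agree_fmP v n : holds_fun v (images_agree_fm n) <-> forall j,
  peval (F j) (fun ij => v (var (neighbour n ij.1) false ij.2)) =
  peval (F j) (fun ij => v (var (neighbour n ij.1) true ij.2)).
Proof.
rewrite holds_fun_big_And; split=> [agree_v j|agree_v j _]; last first.
  by apply/holds_fun_Equal; rewrite !eval_fun_pexpr_term agree_v.
by have /holds_fun_Equal := agree_v j (mem_enum _ _); rewrite !eval_fun_pexpr_term.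
Qed.

Lemma differ_at_one_fmP v : holds_fun v differ_at_one_fm <->
  ~ forall j, v (var idx_one false j) = v (var idx_one true j).
Proof.
rewrite holds_fun_Not holds_fun_big_And; split=> neq same; apply: neq.
  by move=> j _; apply/holds_fun_Equal; rewrite !eval_fun_Var.
by move=> j; have /holds_fun_Equal := same j (mem_enum _ _); rewrite !eval_fun_Var.
Qed.

Lemma stages_fmP v n : holds_fun v (stages_fm n) <->
  holds_fun v differ_at_one_fm /\ forall n', (n' <= n)%N -> holds_fun v (stage_fm n').
Proof.
rewrite holds_fun_And holds_fun_big_And.
by split=> -[? st_v]; split=> // n'; have := st_v n'; rewrite mem_iota ltnS.
Qed.

Lemma aff_set_ext (a b : aff_set S) : (forall j, proj1_sig a j = proj1_sig b j) -> a = b.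
Proof. by case: a b => [a Sa] [b Sb] /= eq_ab; apply/subset_eq_compat/functional_extensionality. Qed.

Lemma stages_sat : ~ finitely_determined tau -> forall n, exists v, holds_fun v (stages_fm n).
Proof.
move=> not_det n.
have [x [y [agree_xy neq_one]]] : exists x y, (forall i : 'I_n.+1,
    tau x (g_ i) = tau y (g_ i)) /\ x (gone G) <> y (gone G).
  apply: NNPP => no_xy; apply: not_det; exists n.+1, (fun i : 'I_n.+1 => g_ i).
  by move=> x y agree; apply: NNPP => neq; apply: no_xy; exists x, y.
pose conf (b : bool) := if b then y else x.
pose v t : K := if unpickle t is Some (n', b, j) then proj1_sig (conf b (g_ n')) j else 0.
have vE n' b j : v (var n' b j) = proj1_sig (conf b (g_ n')) j by rewrite /v /var pickleK.
exists v; apply/stages_fmP; split.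
  apply/differ_at_one_fmP => same; apply/neq_one/aff_set_ext => j.
  by have := same j; rewrite !vE idx_oneE.
move=> n' le_n'n; apply/holds_fun_And; split; last (apply/holds_fun_And; split).
- apply/in_A_fmP => b i; rewrite (functional_extensionality _ _ (vE n' b)).
  exact: (proj2_sig (conf b (g_ n'))).
- by apply/consistent_fmP => n'' _ eq_g b j; rewrite !vE eq_g.
- have imageE b j : peval (F j) (fun ij => v (var (neighbour n' ij.1) b ij.2)) =
      proj1_sig (tau (conf b) (g_ n')) j.
    rewrite tau_local muE; congr peval; apply: functional_extensionality => ij.
    by rewrite vE neighbourE.
  apply/images_agree_fmP => j; rewrite !imageE /=.
  by rewrite (agree_xy (Ordinal (le_n'n : n' < n.+1)%N)).
Qed.

Section Model.
Variable v : nat -> K.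
Hypothesis v_model : forall n, holds_fun v (stages_fm n).

Lemma model_stage n : holds_fun v (stage_fm n).
Proof. by have [_] := (stages_fmP v n).1 (v_model n); apply. Qed.

Lemma model_in_A n b p : S p -> peval p (fun j => v (var n b j)) = 0.
Proof.
apply: B_basis => i; have /holds_fun_And[/in_A_fmP A_n _] := model_stage n.
exact: A_n.
Qed.

Definition point n b : aff_set S := exist _ (fun j => v (var n b j)) (@model_in_A n b).

Lemma point_consistent n n' b : g_ n = g_ n' -> point n b = point n' b.
Proof.
have cons n1 n2 : (n2 <= n1)%N -> g_ n1 = g_ n2 -> point n1 b = point n2 b.
  move=> le_n21 eq_g; apply: aff_set_ext => j /=.
  have /holds_fun_And[_ /holds_fun_And[/consistent_fmP cons_n1 _]] := model_stage n1.
  exact: cons_n1.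
by have [le_n'n|/ltnW le_nn'] := leqP n' n => eq_g; [|symmetry]; apply: cons.
Qed.

Definition in_subgroup (g : G) := exists n, g_ n = g.

Definition conf (b : bool) (g : G) : aff_set S :=
  if excluded_middle_informative (in_subgroup g) is left _
  then point (epsilon (inhabits 0%N) (fun n => g_ n = g)) b
  else point idx_one false.

Lemma conf_in b n : conf b (g_ n) = point n b.
Proof.
rewrite /conf; case: excluded_middle_informative => [g_in|]; last by case; exists n.
exact/point_consistent/(epsilon_spec (inhabits 0%N) (fun n' => g_ n' = g_ n) g_in).
Qed.

Lemma conf_out b g : ~ in_subgroup g -> conf b g = point idx_one false.
Proof. by rewrite /conf; case: excluded_middle_informative. Qed.

Lemma tau_conf : tau (conf false) = tau (conf true).
Proof.
apply: functional_extensionality => g; rewrite !tau_local.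
case: (classic (in_subgroup g)) => [[n <-]|g_out].
  have shiftE b : restr_shift M (conf b) (g_ n) = fun i => point (neighbour n i) b.
    by apply: functional_extensionality => i; rewrite /restr_shift -neighbourE conf_in.
  rewrite !shiftE; apply: aff_set_ext => j; rewrite !muE /=.
  by have /holds_fun_And[_ /holds_fun_And[_ /images_agree_fmP]] := model_stage n; apply.
have nbr_out i : ~ in_subgroup (gmul g (M i)).
  move=> [n eq_g]; apply: g_out; exists (pickle (rcons (word_of n) (i, false))).
  by rewrite word_of_pickle word_eval_rcons eq_g /letter /= -gmulA gmulVr gmul1r.
by congr mu; apply: functional_extensionality => i; rewrite /restr_shift !conf_out.
Qed.

Lemma conf_one : conf false (gone G) <> conf true (gone G).
Proof.
rewrite -idx_oneE !conf_in => eq_one.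
have /stages_fmP[/differ_at_one_fmP differ _] := v_model 0; apply: differ => j.
exact: (congr1 (fun p => proj1_sig p j) eq_one).
Qed.

End Model.

Theorem finitely_determined_of_injective :
  uncountable K -> injective tau -> finitely_determined tau.
Proof.
move=> K_unc tau_inj; apply: NNPP => not_det.
have [|v v_model] := nested_formulas_sat K_unc _ (stages_sat not_det).
  by move=> n v /stages_fmP[differ st]; apply/stages_fmP; split=> // n' /leqW; apply: st.
exact: conf_one v_model (congr1 (fun c => c (gone G)) (tau_inj _ _ (tau_conf v_model))).
Qed.

End FiniteDetermination.

Theorem theorem1p3 (G : group) (K : closedFieldType) (m : nat)
  (S : pexpr K 'I_m -> Prop)
  (tau : (G -> aff_set S) -> (G -> aff_set S)) :
  uncountable K -> algebraic_CA tau -> bijective tau -> reversible tau.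
Proof.
move=> K_unc [k [M [mu [tau_local [F muE]]]]] tau_bij.
have [nB [B [B_S B_basis]]] := finite_basis S.
apply: (reversible_of_finitely_determined tau_local tau_bij).
exact: (finitely_determined_of_injective tau_local muE B_S B_basis K_unc (bij_inj tau_bij)).
Qed.
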